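(* Let $T$ be a complete first-order theory, $\varphi(x,y)$ a formula, $k<\omega$ and $m,n\leq\omega$. Then $T$ has a $(k,m,n)$-weave for $\varphi(x,y)$ of depth $\omega$ if and only if $T$ has a strong $(k,m,n)$-weave for $\varphi(x,y)$ of depth $\omega$.
   Context: Write $2^2=\{0,1\}^2$. A linear order $L$ is ordinal-like if it is a model of the common first-order theory of all ordinals (in the language $\{<\}$); every ordinal, in particular $\omega$ and each finite $d=\{0,\dots,d-1\}$, is ordinal-like. $(2^2)^L$ is the set of functions $L\to 2^2$. A topped initial segment of $L$ is an initial segment $D$ of $L$ such that $L\setminus D$ has a least element, denoted $\top(D)$. $(2^2)^{<L}$ is the set of functions from topped initial segments of $L$ to $2^2$. For $\tau\in(2^2)^{<L}$ and $a\in 2^2$, $\tau^\frown a$ is the function with domain $\mathrm{dom}(\tau)\cup\{\top(\mathrm{dom}\,\tau)\}$ extending $\tau$ and sending $\top(\mathrm{dom}\,\tau)$ to $a$. ''$\sigma$ extends $\tau$'' means $\tau\subseteq\sigma$ as functions. For $A,B\subseteq(2^2)^L$: - $A$ is narrowly below $B$ if there are $\tau\in(2^2)^{<L}$ and $i<2$ with every element of $A$ extending $\tau^\frown(i,0)$ and every element of $B$ extending $\tau^\frown(i,1)$; - $A$ is narrowly to the left of $B$ if there are $\tau\in(2^2)^{<L}$ and $j<2$ with every element of $A$ extending $\tau^\frown(0,j)$ and every element of $B$ extending $\tau^\frown(1,j)$; - $A$ is widely to the left of $B$ if there is $\sigma\in(2^2)^{<L}$ with every element of $A$ extending $\sigma^\frown(0,0)$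 or $\sigma^\frown(0,1)$ and every element of $B$ extending $\sigma^\frown(1,0)$ or $\sigma^\frown(1,1)$. For $n\le\omega$: the finite up-$n$-combs form the smallest class of finite subsets of $(2^2)^L$ containing all singletons and such that if $A,B$ are finite up-$n$-combs, $|A|\le n$ and $A$ is narrowly below $B$, then $A\cup B$ is a finite up-$n$-comb. Finite right-$n$-combs are defined the same way with ''narrowly to the left of'' in place of ''narrowly below''. Finite wide right-$n$-combs: smallest class containing singletons such that if $A,B$ are finite right-$n$-combs, $|A|\le n$ and $A$ is widely to the left of $B$, then $A\cup B$ is a finite wide right-$n$-comb. An (arbitrary) up-$n$-comb / right-$n$-comb / wide right-$n$-comb is a set all of whose finite subsets are finite ones of the respective kind. For $k<\omega$, $m,n\le\omega$, ordinal-like $L$ and $X\subseteq(2^2)^L$, a partial $(k,m,n)$-weave for $\varphi(x,y)$ of depth $L$ on $X$ is a family $(b_\sigma:\sigma\in X)$ of parameters (in a model of $T$) such that for every finite up-$m$-comb $C\subseteq X$ the set $\{\varphi(x,b_\sigma):\sigma\in C\}$ is $k$-inconsistent, and for every finite right-$n$-comb $C\subseteq X$ the set $\{\varphi(x,b_\sigma):\sigma\in C\}$ is consistent. It is strong if moreover $\{\varphi(x,b_\sigma):\sigma\in C\}$ is consistent for every finite wide right-$n$-comb $C\subseteq X$. A (strong) $(k,m,n)$-weave for $\varphi$ of depth $L$ is a partial (strong) one with $X=(2^2)^L$. A $(k,m,n)$-weave of depth $L$ is one for some formula. *)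

From Stdlib Require Import List Arith.
From Stdlib Require Fin.
Import ListNotations.
Set Implicit Arguments.

Record Language := {
  Func : Type;
  Rel : Type;
  farity : Func -> nat;
  rarity : Rel -> nat
}.

Inductive term (L : Language) : Type :=
| tvar : nat -> term L
| tapp : forall f : Func L, (Fin.t (farity L f) -> term L) -> term L.

Inductive formula (L : Language) : Type :=
| ffalse : formula L
| ftrue : formula L
| feq : term L -> term L -> formula L
| frel : forall r : Rel L, (Fin.t (rarity L r) -> term L) -> formula L
| fnot : formula L -> formula L
| fand : formula L -> formula L -> formula L
| for_ : formula L -> formula L -> formula L
| fimp : formula L -> formula L -> formula L
| fall : nat -> formula L -> formula L
| fex : nat -> formula L -> formula L.

Record Structure (L : Language) := {
  carrier :> Type;
  carrier_inh : inhabited carrier;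
  interp_f : forall f : Func L, (Fin.t (farity L f) -> carrier) -> carrier;
  interp_r : forall r : Rel L, (Fin.t (rarity L r) -> carrier) -> Prop
}.

Fixpoint eval_term {L} (M : Structure L) (e : nat -> M) (t : term L) : M :=
  match t with
  | tvar _ v => e v
  | tapp f args => interp_f M f (fun i => eval_term M e (args i))
  end.

Definition upd {A} (e : nat -> A) (v : nat) (a : A) : nat -> A :=
  fun w => if Nat.eqb w v then a else e w.

Fixpoint sat {L} (M : Structure L) (e : nat -> M) (p : formula L) : Prop :=
  match p with
  | ffalse _ => False
  | ftrue _ => True
  | feq t1 t2 => eval_term M e t1 = eval_term M e t2
  | frel r args => interp_r M r (fun i => eval_term M e (args i))
  | fnot q => ~ sat M e q
  | fand q1 q2 => sat M e q1 /\ sat M e q2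
  | for_ q1 q2 => sat M e q1 \/ sat M e q2
  | fimp q1 q2 => sat M e q1 -> sat M e q2
  | fall v q => forall a : M, sat M (upd e v a) q
  | fex v q => exists a : M, sat M (upd e v a) q
  end.

Fixpoint occurs_term {L} (v : nat) (t : term L) : Prop :=
  match t with
  | tvar _ w => w = v
  | tapp f args => exists i, occurs_term v (args i)
  end.

Fixpoint free_in {L} (v : nat) (p : formula L) : Prop :=
  match p with
  | ffalse _ | ftrue _ => False
  | feq t1 t2 => occurs_term v t1 \/ occurs_term v t2
  | frel r args => exists i, occurs_term v (args i)
  | fnot q => free_in v q
  | fand q1 q2 | for_ q1 q2 | fimp q1 q2 => free_in v q1 \/ free_in v q2
  | fall w q | fex w q => w <> v /\ free_in v q
  end.

Definition sentence {L} (p : formula L) : Prop := forall v, ~ free_in v p.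

Definition models_sentence {L} (M : Structure L) (p : formula L) : Prop :=
  forall e : nat -> M, sat M e p.

Definition is_model {L} (M : Structure L) (T : formula L -> Prop) : Prop :=
  forall p, T p -> models_sentence M p.

Definition complete_theory {L} (T : formula L -> Prop) : Prop :=
  (forall p, T p -> sentence p) /\
  (exists M : Structure L, is_model M T) /\
  (forall p, sentence p ->
     (forall M : Structure L, is_model M T -> models_sentence M p) \/
     (forall M : Structure L, is_model M T -> models_sentence M (fnot p))).

(* 2 = bool (0 = false, 1 = true); 2^2 = bool * bool.                  *)
(* Topped initial segments of omega are exactly {0,...,l-1}, with top  *)
(* l, so (2^2)^{<omega} is represented by finite sequences.            *)

Definition path := nat -> bool * bool.
Definition node := list (bool * bool).

Definition extends_cat (sigma : path) (tau : node) (a : bool * bool) : Prop :=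
  (forall i, i < length tau -> sigma i = nth i tau (false, false)) /\
  sigma (length tau) = a.

Definition pset := path -> Prop.

Definition narrowly_below (A B : pset) : Prop :=
  exists (tau : node) (i : bool),
    (forall s, A s -> extends_cat s tau (i, false)) /\
    (forall s, B s -> extends_cat s tau (i, true)).

Definition narrowly_left (A B : pset) : Prop :=
  exists (tau : node) (j : bool),
    (forall s, A s -> extends_cat s tau (false, j)) /\
    (forall s, B s -> extends_cat s tau (true, j)).

Definition widely_left (A B : pset) : Prop :=
  exists (tau : node),
    (forall s, A s -> extends_cat s tau (false, false) \/ extends_cat s tau (false, true)) /\
    (forall s, B s -> extends_cat s tau (true, false) \/ extends_cat s tau (true, true)).

Inductive natinf : Type := Fin_ (n : nat) | Omega.

Definition card_le (A : pset) (n : natinf) : Prop :=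
  match n with
  | Fin_ n => exists l : list path, length l <= n /\ forall s, A s -> In s l
  | Omega => True
  end.

Definition same_set (A B : pset) : Prop := forall s, A s <-> B s.

Inductive fin_up_comb (m : natinf) : pset -> Prop :=
| upc_single : forall (s0 : path) C, same_set C (fun s => s = s0) -> fin_up_comb m C
| upc_join : forall A B C, fin_up_comb m A -> fin_up_comb m B -> card_le A m ->
    narrowly_below A B -> same_set C (fun s => A s \/ B s) -> fin_up_comb m C.

Inductive fin_right_comb (n : natinf) : pset -> Prop :=
| rc_single : forall (s0 : path) C, same_set C (fun s => s = s0) -> fin_right_comb n C
| rc_join : forall A B C, fin_right_comb n A -> fin_right_comb n B -> card_le A n ->
    narrowly_left A B -> same_set C (fun s => A s \/ B s) -> fin_right_comb n C.

(* finite wide right-n-combs: built (as in the paper) from finite right-n-combs *)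
Inductive fin_wide_right_comb (n : natinf) : pset -> Prop :=
| wc_single : forall (s0 : path) C, same_set C (fun s => s = s0) -> fin_wide_right_comb n C
| wc_join : forall A B C, fin_right_comb n A -> fin_right_comb n B -> card_le A n ->
    widely_left A B -> same_set C (fun s => A s \/ B s) -> fin_wide_right_comb n C.

(* Instances phi(x, b): x occupies variables 0..nx-1, the parameter     *)
(* tuple b fills variables nx, nx+1, ... (only finitely many of them    *)
(* are free in phi, so these form the finite tuple y).                  *)

Definition inst {M : Type} (nx : nat) (a b : nat -> M) : nat -> M :=
  fun i => if Nat.ltb i nx then a i else b (i - nx).

(* {phi(x, b_s) : s in C} is consistent (for finite C: realized in M) *)
Definition consistent_in {L} (M : Structure L) (phi : formula L) (nx : nat)
    (b : path -> (nat -> M)) (C : pset) : Prop :=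
  exists a : nat -> M, forall s, C s -> sat M (inst nx a (b s)) phi.

Definition k_inconsistent_in {L} (M : Structure L) (phi : formula L) (nx : nat)
    (b : path -> (nat -> M)) (k : nat) (C : pset) : Prop :=
  forall S : list path, NoDup S -> length S = k -> (forall s, In s S -> C s) ->
    ~ consistent_in M phi nx b (fun s => In s S).

Definition weave {L} (M : Structure L) (phi : formula L) (nx : nat)
    (b : path -> (nat -> M)) (k : nat) (m n : natinf) : Prop :=
  (forall C, fin_up_comb m C -> k_inconsistent_in M phi nx b k C) /\
  (forall C, fin_right_comb n C -> consistent_in M phi nx b C).

Definition strong_weave {L} (M : Structure L) (phi : formula L) (nx : nat)
    (b : path -> (nat -> M)) (k : nat) (m n : natinf) : Prop :=
  weave M phi nx b k m n /\
  (forall C, fin_wide_right_comb n C -> consistent_in M phi nx b C).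

Definition has_weave {L} (T : formula L -> Prop) (phi : formula L) (nx : nat)
    (k : nat) (m n : natinf) : Prop :=
  exists (M : Structure L) (b : path -> (nat -> M)), is_model M T /\ weave M phi nx b k m n.

Definition has_strong_weave {L} (T : formula L -> Prop) (phi : formula L) (nx : nat)
    (k : nat) (m n : natinf) : Prop :=
  exists (M : Structure L) (b : path -> (nat -> M)), is_model M T /\ strong_weave M phi nx b k m n.

(* Interleaving the two coordinates of a path gives an embedding
   [interleave] of (2^2)^omega into itself: level [p] of [s] becomes the
   levels [2p], carrying the first coordinate of [s p], and [2p+1],
   carrying the second.  Narrow splittings are preserved (a narrow downward
   splitting at [tau] becomes one at level [2|tau|+1], a narrow leftward one moves
   to level [2|tau|]), so up-combs and right-combs are mapped to combs
   of the same kind; but now paths that split widely at [tau] already split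
   narrowly to the left at level [2|tau|].  Hence wide right-combs are mapped
   to right-combs, and composing any weave with [interleave] gives a strong
   weave in the same model. *)

From Stdlib Require Import List Arith Lia FunctionalExtensionality FinFun.
Import ListNotations.

Section Image.

Variable f : path -> path.

Definition image (C : pset) : pset := fun t => exists s, C s /\ t = f s.

Lemma card_le_image A n : card_le A n -> card_le (image A) n.
Proof.
  destruct n as [n|]; simpl; auto.
  intros [l [Hl HA]]. exists (map f l). split.
  - now rewrite length_map.
  - intros t [s [Hs ->]]. apply in_map, HA, Hs.
Qed.

Lemma same_set_image_single C s0 :
  same_set C (fun s => s = s0) -> same_set (image C) (fun t => t = f s0).
Proof.
  intros HC t. split.
  - intros [s [Hs ->]]. apply HC in Hs. now subst.
  - intros ->. exists s0. split; [apply HC|]; reflexivity.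
Qed.

Lemma same_set_image_union A B C :
  same_set C (fun s => A s \/ B s) ->
  same_set (image C) (fun t => image A t \/ image B t).
Proof.
  intros HC t. split.
  - intros [s [Hs ->]]. apply HC in Hs as [Hs|Hs]; [left|right]; now exists s.
  - intros [[s [Hs ->]]|[s [Hs ->]]]; exists s; split; auto; apply HC; auto.
Qed.

Lemma consistent_in_image {L} (M : Structure L) phi nx (b : path -> nat -> M) C :
  consistent_in M phi nx b (image C) -> consistent_in M phi nx (fun s => b (f s)) C.
Proof. intros [a Ha]. exists a. intros s Hs. apply Ha. now exists s. Qed.

Lemma k_inconsistent_in_image {L} (M : Structure L) phi nx (b : path -> nat -> M) k C :
  Injective f ->
  k_inconsistent_in M phi nx b k (image C) ->
  k_inconsistent_in M phi nx (fun s => b (f s)) k C.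
Proof.
  intros Hinj HC S HS Hlen HSC [a Ha].
  apply (HC (map f S)).
  - now apply Injective_map_NoDup.
  - now rewrite length_map.
  - intros t Ht. apply in_map_iff in Ht as [s [<- Hs]]. exists s. auto.
  - exists a. intros t Ht. apply in_map_iff in Ht as [s [<- Hs]]. now apply Ha.
Qed.

End Image.

Definition interleave (s : path) : path := fun p =>
  if Nat.odd p then (false, snd (s (Nat.div2 p))) else (fst (s (Nat.div2 p)), false).

Lemma interleave_double s p : interleave s (2 * p) = (fst (s p), false).
Proof. unfold interleave. now rewrite Nat.odd_even, Nat.div2_double. Qed.

Lemma interleave_succ_double s p : interleave s (S (2 * p)) = (false, snd (s p)).
Proof.
  unfold interleave. rewrite Nat.div2_succ_double.
  replace (S (2 * p)) with (2 * p + 1) by lia. now rewrite Nat.odd_odd.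
Qed.

Lemma interleave_inj : Injective interleave.
Proof.
  intros s1 s2 H. extensionality p.
  pose proof (f_equal (fun t => t (2 * p)) H) as E1.
  pose proof (f_equal (fun t => t (S (2 * p))) H) as E2. cbv beta in E1, E2.
  rewrite !interleave_double in E1. rewrite !interleave_succ_double in E2.
  destruct (s1 p), (s2 p). simpl in *. congruence.
Qed.

Lemma interleave_eq_prefix s1 s2 l p :
  (forall i, i < l -> s1 i = s2 i) -> p < 2 * l -> interleave s1 p = interleave s2 p.
Proof.
  intros H Hp. unfold interleave.
  assert (Nat.div2 p < l) by (pose proof (Nat.div2_odd p); destruct (Nat.odd p); simpl in *; lia).
  now rewrite H.
Qed.

Definition node_path (tau : node) : path := fun i => nth i tau (false, false).

(* The node of length [2|tau|] below [interleave s] for every [s] through [tau]. *)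
Definition interleave_node (tau : node) : node :=
  map (interleave (node_path tau)) (seq 0 (2 * length tau)).

Lemma interleave_node_length tau : length (interleave_node tau) = 2 * length tau.
Proof. unfold interleave_node. now rewrite length_map, length_seq. Qed.

Lemma nth_interleave_node s tau p :
  (forall i, i < length tau -> s i = nth i tau (false, false)) ->
  p < 2 * length tau -> nth p (interleave_node tau) (false, false) = interleave s p.
Proof.
  intros Hs Hp. unfold interleave_node.
  rewrite nth_indep with (d' := interleave (node_path tau) 0)
    by (rewrite length_map, length_seq; lia).
  rewrite map_nth, seq_nth by lia.
  apply (interleave_eq_prefix _ _ (length tau)); auto.
  intros i Hi. symmetry. now apply Hs.
Qed.

Lemma extends_interleave_first s tau a c :
  extends_cat s tau (a, c) -> extends_cat (interleave s) (interleave_node tau) (a, false).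
Proof.
  intros [Hs Htop]. split.
  - intros i Hi. rewrite interleave_node_length in Hi.
    symmetry. now apply nth_interleave_node.
  - now rewrite interleave_node_length, interleave_double, Htop.
Qed.

Lemma extends_interleave_second s tau a c :
  extends_cat s tau (a, c) ->
  extends_cat (interleave s) (interleave_node tau ++ [(a, false)]) (false, c).
Proof.
  intros Hext. pose proof (extends_interleave_first _ _ _ _ Hext) as [Hs Htop].
  destruct Hext as [_ Hc]. rewrite interleave_node_length in *. split.
  - intros i Hi. rewrite length_app, interleave_node_length in Hi. simpl in Hi.
    destruct (Nat.lt_ge_cases i (2 * length tau)).
    + rewrite app_nth1 by (now rewrite interleave_node_length). now apply Hs.
    + replace i with (2 * length tau) by lia.
      rewrite app_nth2, interleave_node_length, Nat.sub_diag
        by (rewrite interleave_node_length; lia).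
      exact Htop.
  - rewrite length_app, interleave_node_length, Nat.add_1_r.
    now rewrite interleave_succ_double, Hc.
Qed.

Lemma narrowly_below_interleave A B :
  narrowly_below A B -> narrowly_below (image interleave A) (image interleave B).
Proof.
  intros [tau [i [HA HB]]]. exists (interleave_node tau ++ [(i, false)]), false.
  split; intros t [s [Hs ->]]; eapply extends_interleave_second; auto.
Qed.

Lemma narrowly_left_interleave A B :
  narrowly_left A B -> narrowly_left (image interleave A) (image interleave B).
Proof.
  intros [tau [j [HA HB]]]. exists (interleave_node tau), false.
  split; intros t [s [Hs ->]]; eapply extends_interleave_first; auto.
Qed.

Lemma widely_left_interleave A B :
  widely_left A B -> narrowly_left (image interleave A) (image interleave B).
Proof.
  intros [tau [HA HB]]. exists (interleave_node tau), false.
  split; intros t [s [Hs ->]];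
    [destruct (HA s Hs) | destruct (HB s Hs)]; eapply extends_interleave_first; eauto.
Qed.

Lemma fin_up_comb_interleave m C :
  fin_up_comb m C -> fin_up_comb m (image interleave C).
Proof.
  induction 1 as [s0 C HC | A B C _ IHA _ IHB HA HAB HC].
  - eapply upc_single, same_set_image_single, HC.
  - eapply upc_join; [exact IHA | exact IHB | apply card_le_image, HA
                     | apply narrowly_below_interleave, HAB | apply same_set_image_union, HC].
Qed.

Lemma fin_right_comb_interleave n C :
  fin_right_comb n C -> fin_right_comb n (image interleave C).
Proof.
  induction 1 as [s0 C HC | A B C _ IHA _ IHB HA HAB HC].
  - eapply rc_single, same_set_image_single, HC.
  - eapply rc_join; [exact IHA | exact IHB | apply card_le_image, HA
                    | apply narrowly_left_interleave, HAB | apply same_set_image_union, HC].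
Qed.

Lemma fin_wide_right_comb_interleave n C :
  fin_wide_right_comb n C -> fin_right_comb n (image interleave C).
Proof.
  destruct 1 as [s0 C HC | A B C HA' HB' HA HAB HC].
  - eapply rc_single, same_set_image_single, HC.
  - eapply rc_join; [apply fin_right_comb_interleave, HA' | apply fin_right_comb_interleave, HB'
                    | apply card_le_image, HA | apply widely_left_interleave, HAB
                    | apply same_set_image_union, HC].
Qed.

Lemma weave_interleave_strong {L} (M : Structure L) phi nx (b : path -> nat -> M) k m n :
  weave M phi nx b k m n -> strong_weave M phi nx (fun s => b (interleave s)) k m n.
Proof.
  intros [Hup Hright]. split; [split|].
  - intros C HC. apply k_inconsistent_in_image; [apply interleave_inj|].
    now apply Hup, fin_up_comb_interleave.
  - intros C HC. now apply consistent_in_image, Hright, fin_right_comb_interleave.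
  - intros C HC. now apply consistent_in_image, Hright, fin_wide_right_comb_interleave.
Qed.

Theorem proposition1p6 (L : Language) (T : formula L -> Prop)
  (HT : complete_theory T) (phi : formula L) (nx : nat)
  (k : nat) (m n : natinf) :
  has_weave T phi nx k m n <-> has_strong_weave T phi nx k m n.
Proof.
  split.
  - intros [M [b [HM Hweave]]].
    exists M, (fun s => b (interleave s)). split; [exact HM|].
    now apply weave_interleave_strong.
  - intros [M [b [HM [Hweave _]]]]. now exists M, b.
Qed.
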